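(* Let $\{\ket{j}\}_{j=0}^{7}$ be the computational basis of three qubits, where $\ket{j}=\ket{j_1j_2j_3}$ with $j=4j_1+2j_2+j_3$, and let $$\ket{\psi_4}=-\frac{1}{8\sqrt{2}}\left(\ket{0}+\ket{1}+\ket{2}+\ket{3}+\ket{4}+\ket{5}+\ket{6}-11\ket{7}\right),\qquad \rho_4=\ket{\psi_4}\bra{\psi_4}.$$ Denote by $A_4,B_4,C_4$ the first, second and third qubits of $\rho_4$. Then $$D(B_4C_4|A_4)=D(A_4C_4|B_4)=D(A_4B_4|C_4)=D(C_4|A_4B_4)=D(B_4|A_4C_4)=D(A_4|B_4C_4)$$ $$=-\tfrac{1}{32}(16+\sqrt{229})\log\left(\tfrac{1}{32}(16+\sqrt{229})\right)-\tfrac{1}{32}(16-\sqrt{229})\log\left(\tfrac{1}{32}(16-\sqrt{229})\right)\approx 0.17,$$ and moreover $D(B_4C_4|A_4)=S(\rho_{A_4})$ and $D(C_4|A_4B_4)=S(\rho_{A_4B_4})$.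
   Context: Logarithms are base 2, and $S(\sigma)=-\mathrm{Tr}(\sigma\log\sigma)$ is the von Neumann entropy; $\rho_{A_4}$ and $\rho_{A_4B_4}$ denote the reduced states of $\rho_4$ on the first qubit and on the first two qubits. For a state $\rho_{XY}$ on a bipartite system $X\otimes Y$ (here $X$ and $Y$ are complementary groups of the three qubits), the quantum discord with measurement on $X$ is $$D(Y|X)=\min_{\{E_a\}}\sum_a p_a S(\rho_{Y|a})+S(\rho_X)-S(\rho_{XY}),$$ where the minimum is over all POVMs $\{E_a\}$ on $X$ ($E_a\ge 0$, $\sum_a E_a=I$), $p_a=\mathrm{Tr}((E_a\otimes I)\rho_{XY})$, $\rho_{Y|a}=\mathrm{Tr}_X((E_a\otimes I)\rho_{XY})/p_a$, and $\rho_X,\rho_Y$ are reduced states. *)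

From HB Require Import structures.
From mathcomp Require Import all_boot all_order all_algebra.
From mathcomp Require Import complex.
From mathcomp Require Import classical_sets reals exp.

Set Implicit Arguments.
Unset Strict Implicit.
Unset Printing Implicit Defensive.

Import Order.TTheory GRing.Theory Num.Theory.
Local Open Scope ring_scope.
Local Open Scope complex_scope.

Section QDefs.
Variable R : realType.
Local Notation C := R[i].

(* logarithm base 2 (with ln x = 0 for x <= 0, so 0 * log2 0 = 0) *)
Definition log2 (x : R) : R := ln x / ln 2.

Definition adjmx m n (A : 'M[C]_(m, n)) : 'M[C]_(n, m) :=
  \matrix_(i, j) (A j i)^*.

(* positive semidefinite: v^* A v >= 0 for all v (in the order of C, i.e.
   real and nonnegative) *)
Definition psdmx n (A : 'M[C]_n) : Prop :=
  forall v : 'cV[C]_n, 0 <= (adjmx v *m A *m v) 0 0.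

Definition spectrum n (A : 'M[C]_n) : seq C :=
  xget [::] [set s : seq C | char_poly A = \prod_(r <- s) ('X - r%:P)].

(* von Neumann entropy S(sigma) = - Tr (sigma log sigma), computed from the
   eigenvalues (which are real for density matrices) *)
Definition vN_entropy n (A : 'M[C]_n) : R :=
  - \sum_(r <- spectrum A) complex.Re r * log2 (complex.Re r).

Definition ket3 (a b c : 'I_2) : 'I_8 := inord (4 * a + 2 * b + c).
Definition hi (y : 'I_4) : 'I_2 := inord (y %/ 2).
Definition lo (y : 'I_4) : 'I_2 := inord (y %% 2).

(* A bipartition X|Y of the three qubits is encoded by an index map
   f : 'I_m -> 'I_n -> 'I_8, (x, y) |-> index of the basis vector |x>_X|y>_Y *)
Definition reducedX m n (f : 'I_m -> 'I_n -> 'I_8) (rho : 'M[C]_8) : 'M[C]_m :=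
  \matrix_(i, i') \sum_(j < n) rho (f i j) (f i' j).

(* Tr_X((E ⊗ I) rho) *)
Definition postmeas m n (f : 'I_m -> 'I_n -> 'I_8) (rho : 'M[C]_8)
  (E : 'M[C]_m) : 'M[C]_n :=
  \matrix_(j, j') \sum_(i < m) \sum_(i' < m) E i i' * rho (f i' j) (f i j').

Definition meas_prob m n (f : 'I_m -> 'I_n -> 'I_8) (rho : 'M[C]_8)
  (E : 'M[C]_m) : R := complex.Re (\tr (postmeas f rho E)).

Definition povm m k (E : 'I_k -> 'M[C]_m) : Prop :=
  (forall a, psdmx (E a)) /\ \sum_(a < k) E a = 1%:M.

(* sum_a p_a S(rho_{Y|a});  outcomes with p_a = 0 contribute 0 *)
Definition avg_cond_entropy m n (f : 'I_m -> 'I_n -> 'I_8) (rho : 'M[C]_8)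
  k (E : 'I_k -> 'M[C]_m) : R :=
  \sum_(a < k) meas_prob f rho (E a) *
     vN_entropy ((meas_prob f rho (E a))^-1%:C *: postmeas f rho (E a)).

(* quantum discord D(Y|X) with measurement on X;  the minimum over all POVMs
   is taken as an infimum *)
Definition discord m n (f : 'I_m -> 'I_n -> 'I_8) (rho : 'M[C]_8) : R :=
  inf [set x : R | exists k (E : 'I_k -> 'M[C]_m),
                     povm E /\ x = avg_cond_entropy f rho E]
  + vN_entropy (reducedX f rho) - vN_entropy rho.

Definition sX_A (a : 'I_2) (y : 'I_4) : 'I_8 := ket3 a (hi y) (lo y).
Definition sX_B (b : 'I_2) (y : 'I_4) : 'I_8 := ket3 (hi y) b (lo y).
Definition sX_C (c : 'I_2) (y : 'I_4) : 'I_8 := ket3 (hi y) (lo y) c.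
Definition sX_AB (x : 'I_4) (c : 'I_2) : 'I_8 := ket3 (hi x) (lo x) c.
Definition sX_AC (x : 'I_4) (b : 'I_2) : 'I_8 := ket3 (hi x) b (lo x).
Definition sX_BC (x : 'I_4) (a : 'I_2) : 'I_8 := ket3 a (hi x) (lo x).

Definition psi4 : 'cV[C]_8 :=
  \col_(j < 8) ((- (8 * Num.sqrt 2)^-1 * (if val j == 7%N then -11 else 1))%R)%:C.

Definition rho4 : 'M[C]_8 := psi4 *m adjmx psi4.

Definition discord_value : R :=
  let p := (16 + Num.sqrt 229) / 32 in
  let q := (16 - Num.sqrt 229) / 32 in
  - p * log2 p - q * log2 q.

End QDefs.

From HB Require Import structures.
From mathcomp Require Import all_boot all_order all_algebra.
From mathcomp Require Import complex.
From mathcomp Require Import classical_sets reals exp.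
From mathcomp Require Import ring lra.

Set Implicit Arguments.
Unset Strict Implicit.
Unset Printing Implicit Defensive.

Import Order.TTheory GRing.Theory Num.Theory.
Local Open Scope ring_scope.
Local Open Scope complex_scope.

(* For a pure state rho = psi psi^*, measuring X in a basis leaves every
   conditional state pure, while any POVM gives a nonnegative average
   conditional entropy; hence the infimum in the discord is 0, S(rho) = 0 and
   D(Y|X) = S(rho_X).  Both marginals of a pure state are G G^* and G^* G for
   the coefficient matrix G of psi, and X^n chi(AB) = X^m chi(BA), so they
   have the same nonzero spectrum: the three discords with a two-qubit
   measured part reduce to the single-qubit ones.  Each single-qubit marginal
   of rho4 is (1/128) [[4, -8], [-8, 124]], of trace 1 and determinant
   27/1024, with eigenvalues (16 +- sqrt 229) / 32. *)

Section CharPoly.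
Variable R : comNzRingType.

Lemma char_poly_trmx n (A : 'M[R]_n) : char_poly A^T = char_poly A.
Proof.
rewrite /char_poly -det_tr; congr (\det _); apply/matrixP => i j.
by rewrite !mxE eq_sym.
Qed.

(* Compare the determinant of [[X, A], [B, 1]] with two block-triangular
   factorisations of it. *)
Lemma char_poly_mulmxC m n (A : 'M[R]_(m, n)) (B : 'M[R]_(n, m)) :
  'X^n * char_poly (A *m B) = 'X^m * char_poly (B *m A).
Proof.
pose a := map_mx polyC A; pose b := map_mx polyC B.
pose M := block_mx ('X%:M : 'M_m) a b 1%:M.
have detM : \det M = char_poly (A *m B).
  have -> : M = block_mx 1%:M a 0 1%:M *m block_mx (char_poly_mx (A *m B)) 0 b 1%:M.
    rewrite mulmx_block !mul1mx !mul0mx ?mulmx0 ?mulmx1 ?addr0 ?add0r.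
    by rewrite /char_poly_mx map_mxM -/a -/b subrK.
  by rewrite det_mulmx det_ublock det_lblock !det1 !mul1r mulr1.
have : block_mx 1%:M 0 (- b) ('X%:M : 'M_n) *m M
       = block_mx ('X%:M) a 0 (char_poly_mx (B *m A)).
  rewrite mulmx_block !mul1mx !mul0mx ?add0r ?addr0 ?mulmx1 ?mulNmx.
  by rewrite mul_mx_scalar mul_scalar_mx addNr addrC /char_poly_mx map_mxM.
move/(congr1 determinant); rewrite det_mulmx det_lblock det_ublock !det_scalar.
by rewrite expr1n mul1r detM.
Qed.

Lemma char_poly2 (A : 'M[R]_2) :
  char_poly A = 'X^2 - (A 0 0 + A 1 1)%:P * 'X + (A 0 0 * A 1 1 - A 0 1 * A 1 0)%:P.
Proof.
have l1 (j : 'I_1) : lift 0 j = 1 by apply/val_inj; rewrite (ord1 j).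
have l0 (j : 'I_1) : lift 1 j = 0 by apply/val_inj; rewrite (ord1 j).
rewrite /char_poly (expand_det_row _ 0) !big_ord_recl big_ord0 /cofactor.
rewrite !det_mx11 !mxE /= !l1 !l0 !rmorphB !rmorphM /= !mulr1n !mulr0n.
by rewrite !expr0 !expr1 !mul1r; ring.
Qed.

End CharPoly.

Section Spectrum.
Variable R : realType.
Local Notation C := R[i].

Lemma char_poly_spectrum n (A : 'M[C]_n) :
  char_poly A = \prod_(r <- spectrum A) ('X - r%:P).
Proof.
rewrite /spectrum; set P := (X in xget _ X).
suff : P (xget [::] P) by [].
apply: xgetPex; have [r Hr] := closed_field_poly_normal (char_poly A).
by exists r; rewrite /P /= Hr (monicP (char_poly_monic A)) scale1r.
Qed.

Lemma root_spectrum n (A : 'M[C]_n) r : r \in spectrum A -> root (char_poly A) r.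
Proof. by rewrite char_poly_spectrum root_prod_XsubC. Qed.

Lemma size_spectrum n (A : 'M[C]_n) : size (spectrum A) = n.
Proof.
by have := size_char_poly A; rewrite char_poly_spectrum size_prod_XsubC => -[].
Qed.

Lemma sum_spectrum n (A : 'M[C]_n) : \sum_(r <- spectrum A) r = \tr A.
Proof.
case: n A => [|n] A.
  have := size_spectrum A; case: (spectrum A) => // _.
  by rewrite big_nil /mxtrace big_ord0.
have := char_poly_trace A (ltn0Sn n).
have := @coefPn_prod_XsubC _ (spectrum A); rewrite size_spectrum -char_poly_spectrum.
by move=> -> // /oppr_inj.
Qed.

Lemma spectrum_eq n (A : 'M[C]_n) (s : seq C) :
  char_poly A = \prod_(r <- s) ('X - r%:P) -> perm_eq (spectrum A) s.
Proof. by rewrite char_poly_spectrum => /prod_XsubC_eq. Qed.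

Lemma spectrum2 (A : 'M[C]_2) p q :
    A 0 0 + A 1 1 = p + q -> A 0 0 * A 1 1 - A 0 1 * A 1 0 = p * q ->
  perm_eq (spectrum A) [:: p; q].
Proof.
move=> trA detA; apply: spectrum_eq.
by rewrite char_poly2 trA detA !big_cons big_nil !rmorphD rmorphM; ring.
Qed.

End Spectrum.

Section PositiveSemidefinite.
Variable R : realType.
Local Notation C := R[i].

Lemma adjmxK m n (A : 'M[C]_(m, n)) : adjmx (adjmx A) = A.
Proof. by apply/matrixP => i j; rewrite !mxE conjcK. Qed.

Lemma adjmxM m n p (A : 'M[C]_(m, n)) (B : 'M[C]_(n, p)) :
  adjmx (A *m B) = adjmx B *m adjmx A.
Proof.
apply/matrixP => i j; rewrite !mxE rmorph_sum; apply: eq_bigr => k _.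
by rewrite !mxE rmorphM mulrC.
Qed.

Lemma adjmx_delta m n (i : 'I_m) (j : 'I_n) :
  adjmx (delta_mx i j : 'M[C]_(m, n)) = delta_mx j i.
Proof.
by apply/matrixP => a b; rewrite !mxE andbC; case: (_ && _); rewrite ?rmorph1 ?rmorph0.
Qed.

Lemma adjmx_trmx m n (A : 'M[C]_(m, n)) : adjmx A^T = (adjmx A)^T.
Proof. by apply/matrixP => i j; rewrite !mxE. Qed.

Lemma mulmx_adjmx_gt0 n (v : 'rV[C]_n) : v != 0 -> 0 < (v *m adjmx v) 0 0.
Proof.
move=> vn0; rewrite mxE.
have ge0 j : 0 <= v 0 j * adjmx v j 0 by rewrite mxE mul_conjC_ge0.
rewrite lt_def sumr_ge0 ?andbT //; apply: contra vn0 => /eqP /psumr_eq0P v0.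
apply/eqP/matrixP => i j; rewrite (ord1 i) mxE.
by have /eqP := v0 (fun j _ => ge0 j) j isT; rewrite mxE mul_conjC_eq0 => /eqP.
Qed.

Lemma mulmx_adjmx_ge0 n (v : 'rV[C]_n) : 0 <= (v *m adjmx v) 0 0.
Proof.
have [->|vn0] := eqVneq v 0; first by rewrite mul0mx mxE.
exact/ltW/mulmx_adjmx_gt0.
Qed.

Lemma adjmx_mulmx_ge0 n (u : 'cV[C]_n) : 0 <= (adjmx u *m u) 0 0.
Proof. by rewrite -{2}[u]adjmxK mulmx_adjmx_ge0. Qed.

Lemma psdmx1 n : psdmx (1%:M : 'M[C]_n).
Proof. by move=> v; rewrite mulmx1 adjmx_mulmx_ge0. Qed.

Lemma psdmx_congr m n (G : 'M[C]_(n, m)) (E : 'M[C]_m) :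
  psdmx E -> psdmx (G *m E *m adjmx G).
Proof.
move=> pE v; have := pE (adjmx G *m v).
by rewrite adjmxM adjmxK !mulmxA.
Qed.

Lemma psdmxZ n (A : 'M[C]_n) (c : C) : 0 <= c -> psdmx A -> psdmx (c *: A).
Proof. by move=> c0 pA v; rewrite -scalemxAr -scalemxAl mxE mulr_ge0. Qed.

Lemma psdmx_trmx n (E : 'M[C]_n) : psdmx E -> psdmx E^T.
Proof.
move=> pE v; have := pE (adjmx v)^T; rewrite adjmx_trmx adjmxK.
have -> : (adjmx v *m E^T *m v) 0 0 = (adjmx v *m E^T *m v)^T 0 0 by rewrite [RHS]mxE.
by rewrite !trmx_mul trmxK mulmxA.
Qed.

Lemma psdmx_diag_ge0 n (A : 'M[C]_n) j : psdmx A -> 0 <= A j j.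
Proof.
by move=> pA; have := pA (delta_mx j 0); rewrite adjmx_delta -rowE -colE !mxE.
Qed.

Lemma psdmx_tr_ge0 n (A : 'M[C]_n) : psdmx A -> 0 <= \tr A.
Proof. by move=> pA; apply: sumr_ge0 => j _; apply: psdmx_diag_ge0. Qed.

Lemma psdmx_root_ge0 n (A : 'M[C]_n) r : psdmx A -> root (char_poly A) r -> 0 <= r.
Proof.
move=> pA; rewrite -eigenvalue_root_char => /eigenvalueP [v Av vn0].
have := pA (adjmx v); rewrite adjmxK Av -scalemxAl mxE.
by rewrite pmulr_lge0 // mulmx_adjmx_gt0.
Qed.

End PositiveSemidefinite.

Section Entropy.
Variable R : realType.
Local Notation C := R[i].

Lemma log2_le0 (x : R) : x <= 1 -> log2 x <= 0.
Proof.
move=> x1; rewrite /log2 mulr_le0_ge0 ?ln_le0 // invr_ge0 ltW // ln_gt0 //.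
by rewrite ltr1n.
Qed.

Lemma vN_entropy_ge0 n (A : 'M[C]_n) : psdmx A -> \tr A = 1 -> 0 <= vN_entropy A.
Proof.
move=> pA trA; rewrite /vN_entropy oppr_ge0 big_seq; apply: sumr_le0 => r rA.
have spec_ge0 x : x \in spectrum A -> 0 <= x.
  by move=> xA; apply: psdmx_root_ge0 pA (root_spectrum xA).
have r1 : r <= 1.
  rewrite -trA -sum_spectrum (perm_big _ (perm_to_rem rA)) big_cons lerDl big_seq.
  by apply: sumr_ge0 => x /mem_rem /spec_ge0.
move: (spec_ge0 r rA) r1; rewrite !lecE /= => /andP [_ r0] /andP [_ r1].
by rewrite mulr_ge0_le0 // log2_le0.
Qed.

(* Padding a spectrum with zeros does not change the entropy. *)
Lemma vN_entropy_char_polyXn m n (A : 'M[C]_m) (B : 'M[C]_n) k l :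
  'X^k * char_poly A = 'X^l * char_poly B -> vN_entropy A = vN_entropy B.
Proof.
have padX (s : seq C) j :
    'X^j * \prod_(r <- s) ('X - r%:P) = \prod_(r <- nseq j 0 ++ s) ('X - r%:P).
  by elim: j => [|j IH]; rewrite ?expr0 ?mul1r // cat_cons big_cons -IH subr0 exprS mulrA.
have entropy_pad (s : seq C) j :
    \sum_(r <- nseq j 0 ++ s) complex.Re r * log2 (complex.Re r)
    = \sum_(r <- s) complex.Re r * log2 (complex.Re r).
  by rewrite big_cat /= big1_seq ?add0r // => r /andP [_ /nseqP [-> _]]; rewrite mul0r.
rewrite !char_poly_spectrum !padX => /prod_XsubC_eq s_eq.
by rewrite /vN_entropy -(entropy_pad _ k) (perm_big _ s_eq) entropy_pad.
Qed.

Lemma vN_entropy1 : vN_entropy (1%:M : 'M[C]_1) = 0.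
Proof.
have spec1 : perm_eq (spectrum (1%:M : 'M[C]_1)) [:: 1].
  by apply: spectrum_eq; rewrite big_seq1 /char_poly det_mx11 !mxE.
by rewrite /vN_entropy (perm_big _ spec1) big_seq1 /log2 ln1 mul0r mulr0 oppr0.
Qed.

Lemma vN_entropy_rank1 n (u : 'cV[C]_n) (c : C) :
  c * (adjmx u *m u) 0 0 = 1 -> vN_entropy (c *: (u *m adjmx u)) = 0.
Proof.
move=> cu1; rewrite -vN_entropy1; apply: (@vN_entropy_char_polyXn _ _ _ _ 1 n).
rewrite scalemxAl char_poly_mulmxC -scalemxAr; congr (_ * char_poly _).
by rewrite [LHS]mx11_scalar mxE cu1.
Qed.

End Entropy.

Section PureStates.
Variable R : realType.
Local Notation C := R[i].
Variables (m n : nat) (f : 'I_m -> 'I_n -> 'I_8) (psi : 'cV[C]_8).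
Local Notation rho := (psi *m adjmx psi).

Definition coefmx : 'M[C]_(n, m) := \matrix_(j, i) psi (f i j) 0.

Lemma postmeas_pure E : postmeas f rho E = coefmx *m E^T *m adjmx coefmx.
Proof.
apply/matrixP => j j'; rewrite !mxE; apply: eq_bigr => i _.
rewrite !mxE big_distrl /=; apply: eq_bigr => i' _.
by rewrite !mxE big_ord1 !mxE mulrA [_ * E i i']mulrC.
Qed.

Lemma reducedX_pure : reducedX f rho = coefmx^T *m adjmx coefmx^T.
Proof.
apply/matrixP => i i'; rewrite !mxE; apply: eq_bigr => j _.
by rewrite !mxE big_ord1 !mxE.
Qed.

Lemma avg_cond_entropy_pure_ge0 k (E : 'I_k -> 'M[C]_m) :
  povm E -> 0 <= avg_cond_entropy f rho E.
Proof.
move=> [pE _]; apply: sumr_ge0 => a _.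
set P := postmeas _ _ _; set p := meas_prob _ _ _.
have pP : psdmx P by rewrite /P postmeas_pure; apply/psdmx_congr/psdmx_trmx.
have trP : p%:C = \tr P by rewrite RRe_real // ger0_real // psdmx_tr_ge0.
have p_ge0 : 0 <= p by rewrite -lecR trP psdmx_tr_ge0.
have [->|pn0] := eqVneq p 0; first by rewrite mul0r.
rewrite mulr_ge0 // vN_entropy_ge0 //; first by apply: psdmxZ; rewrite // lecR invr_ge0.
by rewrite mxtraceZ -trP -rmorphM /= mulVf.
Qed.

Definition basis_povm (a : 'I_m) : 'M[C]_m := delta_mx a a.

Lemma delta_mx_rank1 (a : 'I_m) :
  delta_mx a a = delta_mx a 0 *m 1%:M *m adjmx (delta_mx a 0 : 'cV[C]_m).
Proof. by rewrite mulmx1 adjmx_delta mul_delta_mx. Qed.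

Lemma povm_basis : povm basis_povm.
Proof.
split=> [a|]; last by rewrite -mx1_sum_delta.
by rewrite /basis_povm delta_mx_rank1; apply/psdmx_congr/psdmx1.
Qed.

(* A rank-one measurement leaves the pure state psi in a pure conditional state. *)
Lemma avg_cond_entropy_basis : avg_cond_entropy f rho basis_povm = 0.
Proof.
apply: big1 => a _.
pose u := coefmx *m (delta_mx a 0 : 'cV[C]_m).
have Pu : postmeas f rho (basis_povm a) = u *m adjmx u.
  by rewrite postmeas_pure trmx_delta delta_mx_rank1 mulmx1 adjmxM !mulmxA.
rewrite /meas_prob Pu mxtrace_mulC trace_mx11.
have uu : (complex.Re ((adjmx u *m u) 0 0))%:C = (adjmx u *m u) 0 0.
  by rewrite RRe_real // ger0_real // adjmx_mulmx_ge0.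
have [->|pn0] := eqVneq (complex.Re ((adjmx u *m u) 0 0)) 0; first by rewrite mul0r.
by rewrite vN_entropy_rank1 ?mulr0 // -{2}uu -rmorphM mulVf.
Qed.

Lemma inf_avg_cond_entropy_pure :
  inf [set x : R | exists k (E : 'I_k -> 'M[C]_m),
                     povm E /\ x = avg_cond_entropy f rho E] = 0.
Proof.
set S := (X in inf X).
have S0 : S 0.
  by exists m, basis_povm; rewrite avg_cond_entropy_basis; split; first exact: povm_basis.
have S_ge0 : lbound S 0 by move=> x [k [E [pE ->]]]; apply: avg_cond_entropy_pure_ge0.
apply/le_anti/andP; split; first by apply: (ge_inf _ S0); exists 0.
by apply: lb_le_inf => //; exists 0.
Qed.

Hypothesis psi_unit : (adjmx psi *m psi) 0 0 = 1.

Lemma vN_entropy_pure : vN_entropy rho = 0.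
Proof. by rewrite -[rho]scale1r vN_entropy_rank1 // mul1r. Qed.

Lemma discord_pure : discord f rho = vN_entropy (reducedX f rho).
Proof. by rewrite /discord inf_avg_cond_entropy_pure vN_entropy_pure add0r subr0. Qed.

End PureStates.

Lemma coefmx_swap (R : realType) m n (f : 'I_m -> 'I_n -> 'I_8)
    (g : 'I_n -> 'I_m -> 'I_8) (psi : 'cV[R[i]]_8) :
  (forall x y, g y x = f x y) -> coefmx g psi = (coefmx f psi)^T.
Proof. by move=> gf; apply/matrixP => i j; rewrite !mxE gf. Qed.

(* The two marginals of a pure state share their nonzero spectrum. *)
Lemma vN_entropy_reducedX_swap (R : realType) m n (f : 'I_m -> 'I_n -> 'I_8)
    (g : 'I_n -> 'I_m -> 'I_8) (psi : 'cV[R[i]]_8) :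
  (forall x y, g y x = f x y) ->
  vN_entropy (reducedX g (psi *m adjmx psi)) = vN_entropy (reducedX f (psi *m adjmx psi)).
Proof.
move=> gf; rewrite !reducedX_pure (coefmx_swap psi gf) trmxK.
apply: (@vN_entropy_char_polyXn _ _ _ _ _ m n).
by rewrite -[in RHS]char_poly_trmx trmx_mul adjmx_trmx !trmxK char_poly_mulmxC.
Qed.

Lemma discord_pure_swap (R : realType) m n (f : 'I_m -> 'I_n -> 'I_8)
    (g : 'I_n -> 'I_m -> 'I_8) (psi : 'cV[R[i]]_8) :
    (adjmx psi *m psi) 0 0 = 1 -> (forall x y, g y x = f x y) ->
  discord g (psi *m adjmx psi) = discord f (psi *m adjmx psi).
Proof.
by move=> psi_unit gf; rewrite !discord_pure // (vN_entropy_reducedX_swap _ gf).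
Qed.

Section Rho4.
Variable R : realType.
Local Notation C := R[i].

(* [amp (j == 7)] is the amplitude of |j> in psi4, up to the factor -1/(8 sqrt 2). *)
Definition amp (b : bool) : R := if b then -11 else 1.

Lemma rho4E (x y : 'I_8) :
  rho4 R x y = (amp (x == 7 :> nat) * amp (y == 7 :> nat) / 128)%:C.
Proof.
rewrite /rho4 mxE big_ord1 !mxE conjc_real -rmorphM; congr _%:C.
have norm2 : (8 * Num.sqrt 2)^-1 * (8 * Num.sqrt 2)^-1 = 128^-1 :> R.
  by rewrite -invfM mulrACA -(expr2 (Num.sqrt _)) sqr_sqrtr ?ler0n // -!natrM.
by rewrite mulrACA mulrNN norm2 mulrC.
Qed.

Lemma psi4_unit : (adjmx (psi4 R) *m psi4 R) 0 0 = 1.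
Proof.
rewrite -trace_mx11 mxtrace_mulC -/(rho4 R) /mxtrace.
rewrite !big_ord_recr big_ord0 /= !rho4E -!rmorphD.
transitivity (1 : R)%:C; last by rewrite rmorph1.
by congr _%:C; rewrite /amp /=; lra.
Qed.

Lemma ket3_eq7 (a b c : 'I_2) :
  (ket3 a b c == 7 :> nat) = [&& a == 1 :> nat, b == 1 :> nat & c == 1 :> nat].
Proof.
by case: a b c => [[|[|//]] ?] [[|[|//]] ?] [[|[|//]] ?]; rewrite /ket3 inordK.
Qed.

Lemma hi_lo_eq3 (y : 'I_4) : (hi y == 1 :> nat) && (lo y == 1 :> nat) = (y == 3 :> nat).
Proof. by case: y => [[|[|[|[|//]]]] ?]; rewrite /hi /lo !inordK. Qed.

Section Marginal.
Variable f : 'I_2 -> 'I_4 -> 'I_8.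
Hypothesis f_eq7 : forall a y, (f a y == 7 :> nat) = (a == 1 :> nat) && (y == 3 :> nat).

Lemma reducedX_rho4E a a' : reducedX f (rho4 R) a a'
  = ((3 + amp (a == 1 :> nat) * amp (a' == 1 :> nat)) / 128)%:C.
Proof.
rewrite mxE !big_ord_recr big_ord0 /= !rho4E !f_eq7 /= -!rmorphD; congr _%:C.
rewrite !andbF !andbT /=; ring.
Qed.

Lemma vN_entropy_rho4_marginal : vN_entropy (reducedX f (rho4 R)) = discord_value R.
Proof.
pose s := Num.sqrt (229 : R); pose p := (16 + s) / 32; pose q := (16 - s) / 32.
have s2 : s ^+ 2 = 229 by rewrite sqr_sqrtr ?ler0n.
have spec : perm_eq (spectrum (reducedX f (rho4 R))) [:: p%:C; q%:C].
  apply: spectrum2; rewrite !reducedX_rho4E.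
    by rewrite -!rmorphD; congr _%:C; rewrite /amp /= /p /q; lra.
  by rewrite -!rmorphM -rmorphB; congr _%:C; rewrite /amp /= /p /q; nra.
by rewrite /vN_entropy (perm_big _ spec) !big_cons big_nil /= addr0 opprD -mulNr.
Qed.

Lemma discord_rho4_marginal : discord f (rho4 R) = discord_value R.
Proof. by rewrite (discord_pure f psi4_unit) vN_entropy_rho4_marginal. Qed.

End Marginal.

End Rho4.

Theorem lemma4 (R : realType) :
  let rho := rho4 R in
  discord sX_A rho = discord sX_B rho /\
      discord sX_B rho = discord sX_C rho /\
      discord sX_C rho = discord sX_AB rho /\
      discord sX_AB rho = discord sX_AC rho /\
      discord sX_AC rho = discord sX_BC rho /\
      discord sX_BC rho = discord_value R /\
      discord sX_A rho = vN_entropy (reducedX sX_A rho) /\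
    discord sX_AB rho = vN_entropy (reducedX sX_AB rho).
Proof.
move=> rho; have unit := psi4_unit R.
have dA : discord sX_A rho = discord_value R.
  by apply: discord_rho4_marginal => a y; rewrite ket3_eq7 hi_lo_eq3.
have dB : discord sX_B rho = discord_value R.
  by apply: discord_rho4_marginal => a y; rewrite ket3_eq7 andbCA hi_lo_eq3.
have dC : discord sX_C rho = discord_value R.
  by apply: discord_rho4_marginal => a y; rewrite ket3_eq7 andbA andbC hi_lo_eq3.
have dAB : discord sX_AB rho = discord_value R.
  by rewrite -dC; apply: discord_pure_swap => // x y.
have dAC : discord sX_AC rho = discord_value R.
  by rewrite -dB; apply: discord_pure_swap => // x y.
have dBC : discord sX_BC rho = discord_value R.
  by rewrite -dA; apply: discord_pure_swap => // x y.
rewrite -(discord_pure sX_A unit) -(discord_pure sX_AB unit).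
by rewrite dA dB dC dAB dAC dBC; do !split.
Qed.
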